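(* Let $L$ be a finite graded atomic lattice with a sheaf $F$ of finite-dimensional vector spaces and let $\widetilde L$ be its Boolean cover with induced sheaf $F$. Then $$\chi\,\mathrm{HC}_*(\widetilde L;F)=\chi'_{(L,F)}(1)=\sum_{x\in L}\mu_L(\mathbf{0},x)\dim F(x),$$ where $\chi'_{(L,F)}$ is the derivative of $\chi_{(L,F)}(t)=\sum_{x\in L}\mu_L(\mathbf{0},x)t^{\dim F(x)}$.
   Context: Graded atomic lattice: finite lattice with minimum $\mathbf{0}$ and rank function ($rk(\mathbf{0})=0$) in which every element is a join of atoms (rank-$1$ elements). Möbius function: $\mu_L(x,x)=1$, $\mu_L(x,y)=-\sum_{x\le z<y}\mu_L(x,z)$. A sheaf assigns a vector space $F(x)$ to each element and a linear map $F^y_x:F(y)\to F(x)$ for $x\le y$, functorially. $\chi\,\mathrm{HC}_*=\sum_n(-1)^n\dim\mathrm{HC}_n$. Boolean cover: $\widetilde L$ is the lattice of subsets of the atoms of $L$, $f(S)=$ join of $S$ in $L$, induced sheaf $F(S)=F(f(S))$ with maps $F^{f(T)}_{f(S)}$. $\mathrm{HC}_*$ of a Boolean lattice of subsets of $\{a_1,\dots,a_n\}$ with sheaf $G$: homology of $C_k=\bigoplus_{|x|=k}G(x)$, $d=\sum\varepsilon^x_yG^x_y$ over $y\subset x$, $|y|=|x|-1$, $\varepsilon^x_y=(-1)^{j-1}$ when $x=\{a_{i_1},\dots,a_{i_k}\}$ ($i_1<\cdots<i_k$), $y=x\setminus\{a_{i_j}\}$. *)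

From HB Require Import structures.
From mathcomp Require Import all_boot all_order all_algebra.
Set Implicit Arguments. Unset Strict Implicit. Unset Printing Implicit Defensive.
Import Order.TTheory GRing.Theory Num.Theory.

Section Defs.
Variables (K : fieldType) (d : Order.disp_t) (L : finTBLatticeType d).
Local Open Scope order_scope.

Definition covers (x y : L) : bool :=
  (x < y) && [forall z : L, ~~ ((x < z) && (z < y))].

(* The fuel #|L| is always sufficient (chains have at most #|L| elements). *)
Fixpoint mob_fuel (k : nat) (x y : L) : int :=
  match k with
  | 0 => 0%R
  | k'.+1 => if x == y then 1%R
             else if x <= y then
               (- \sum_(z : L | ((x <= z) && (z < y))%O) mob_fuel k' x z)%R
             else 0%R
  end.
Definition mobius (x y : L) : int := mob_fuel #|L| x y.

Definition chi_poly (n : L -> nat) : {poly int} :=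
  (\sum_(x : L) (mobius \bot x)%:P * 'X^(n x))%R.

Variable rk : L -> nat.

Definition atom_type := {x : L | rk x == 1%N}.

Definition fjoin (S : {set atom_type}) : L := \join_(a in S) val a.

Variable n : L -> nat.                          (* n x = dim F(x) *)
Variable res : forall x y : L, 'M[K]_(n y, n x). (* F^y_x acting on row vectors *)

(* basis of the total chain space: pairs (S, i) with i < dim F(f S) *)
Definition cell := {S : {set atom_type} & 'I_(n (fjoin S))}.
Definition cells (k : nat) : {set cell} := [set c : cell | #|tag c| == k].

(* epsilon^S_T = (-1)^(j-1) where S \ T = {a_{i_j}}: j-1 is the number of
   elements of T (= of S) preceding the removed atom in the fixed order
   a_1 < ... < a_m of the atoms (given by enum_rank). *)
Definition eps_count (S T : {set atom_type}) : nat :=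
  #|[set p : (atom_type * atom_type)%type |
      (p.1 \in T) && (p.2 \in (S :\: T)) && (enum_rank p.1 < enum_rank p.2)%N]|.
Definition eps (S T : {set atom_type}) : K := ((-1) ^+ eps_count S T)%R.

Definition bd (k : nat) : 'M[K]_(#|cells k.+1|, #|cells k|) :=
  \matrix_(r < #|cells k.+1|, c < #|cells k|)
    (let x : cell := enum_val r in let y : cell := enum_val c in
     if tag y \subset tag x then
       (eps (tag x) (tag y) *
        res (fjoin (tag y)) (fjoin (tag x)) (tagged x) (tagged y))%R
     else 0%R).

Definition cycles (k : nat) : 'M[K]_(#|cells k|) :=
  match k with 0 => 1%:M | k'.+1 => kermx (bd k') end.

Definition dimHC (k : nat) : nat :=
  (\rank (cycles k) - \rank (bd k :&: cycles k)%MS)%N.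

(* Euler characteristic; HC_k = 0 for k > number of atoms *)
Definition euler_HC : int :=
  (\sum_(k < #|{: atom_type}|.+1) (-1) ^+ k * (dimHC k)%:Z)%R.

End Defs.

From HB Require Import structures.
From mathcomp Require Import all_boot all_order all_algebra.
From mathcomp Require Import zify ring.
Import Order.TTheory GRing.Theory Num.Theory.
Set Implicit Arguments. Unset Strict Implicit. Unset Printing Implicit Defensive.
Local Open Scope ring_scope.

(* The chain complex C_k = (+)_{|S| = k} F(f S) is a complex because every pair
   T subset S with |S \ T| = 2 is reached through exactly two intermediate sets,
   with opposite signs.  Its Euler characteristic is therefore
   sum_k (-1)^k dim C_k = sum_S (-1)^|S| dim F(f S) = sum_x c(x) dim F(x), where
   c(x) = sum_{f S = x} (-1)^|S|.  Finally c(x) = mu(0, x) (Rota's crosscut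
   theorem for the atoms): sum_{z <= x} c(z) is the alternating sum over all sets
   of atoms below x, which vanishes unless x = 0, since a nonzero x lies above
   some atom by atomicity. *)

Lemma chi_poly_deriv1 (d : Order.disp_t) (L : finTBLatticeType d) (n : L -> nat) :
  ((chi_poly n)^`()).[1] = \sum_(x : L) mobius \bot%O x * (n x)%:Z.
Proof.
rewrite /chi_poly raddf_sum horner_sum; apply: eq_bigr => x _.
by rewrite /= mul_polyC derivZ derivXn hornerZ hornerMn hornerXn expr1n natz.
Qed.

Section Mobius.
Variables (d : Order.disp_t) (L : finTBLatticeType d).
Local Open Scope order_scope.

Definition below (x y : L) : {set L} := [set z | x <= z < y].

Lemma card_below_lt (x y z : L) :
  x <= z -> z < y -> (#|below x z| < #|below x y|)%N.
Proof.
move=> xz zy; apply: proper_card; apply/properP; split.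
  by apply/subsetP => w; rewrite !inE => /andP[-> /lt_trans ->].
by exists z; rewrite !inE ?xz ?zy ?ltxx.
Qed.

Lemma card_below_lt_card (x y : L) : (#|below x y| < #|L|)%N.
Proof.
apply: proper_card; apply/properP; split; first exact: subset_predT.
by exists y; rewrite ?inE ?ltxx ?andbF.
Qed.

Lemma mob_fuel_enough k k' (x y : L) :
  (#|below x y| < k)%N -> (#|below x y| < k')%N ->
  mob_fuel k x y = mob_fuel k' x y.
Proof.
elim: k k' y => [|k IH] [|k'] y //=; rewrite !ltnS => hk hk'.
case: eqP => // _; case: ifP => // _; congr (- _)%R.
apply: eq_bigr => z /andP[xz zy]; have lt_z := card_below_lt xz zy.
by apply: IH; apply: leq_trans lt_z _.
Qed.

Lemma mobius_refl (x : L) : mobius x x = 1%R.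
Proof.
by rewrite /mobius; have := card_below_lt_card x x; case: #|L| => //= k _; rewrite eqxx.
Qed.

Lemma mobius_rec (x y : L) : x != y -> x <= y ->
  mobius x y = (- \sum_(z : L | (x <= z < y)%O) mobius x z)%R.
Proof.
move=> nxy xy; rewrite /mobius.
have := card_below_lt_card x y; case E: #|L| => [|k] // _.
rewrite [LHS]/= (negbTE nxy) xy; congr (- _)%R; apply: eq_bigr => z /andP[xz zy].
have := card_below_lt_card x z; rewrite E => lt_z.
apply: mob_fuel_enough => //; rewrite -ltnS -E.
exact: leq_ltn_trans (card_below_lt xz zy) (card_below_lt_card x y).
Qed.

Lemma mobius_bot_unique (g : L -> int) :
  (forall x, \sum_(z | z <= x) g z = (x == \bot)%:R) ->
  forall x, mobius \bot x = g x.
Proof.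
move=> g_sum x; have [m lt_m] := ubnP #|below \bot x|.
elim: m x lt_m => // m IH x; rewrite ltnS => hx.
have g_rec : g x = ((x == \bot)%:R - \sum_(z | (z < x)%O) g z)%R.
  rewrite -g_sum (bigD1 x) //= (eq_bigl (fun z => z < x)) ?addrK // => z.
  by rewrite lt_neqAle andbC.
rewrite g_rec; have [->|nx] := eqVneq x \bot.
  by rewrite mobius_refl big_pred0 ?subr0 // => z; rewrite ltx0.
rewrite mobius_rec ?le0x 1?eq_sym // sub0r; congr (- _)%R.
apply: eq_big => [z|z /andP[_ zx]]; first by rewrite le0x.
by apply: IH; apply: leq_trans (card_below_lt (le0x _) zx) hx.
Qed.

End Mobius.

Lemma sum_subsets_sign_eq0 (T : finType) (B : {set T}) : B != set0 ->
  \sum_(S : {set T} | S \subset B) (-1) ^+ #|S| = 0 :> int.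
Proof.
case/set0Pn => a aB.
pose t (S : {set T}) := if a \in S then S :\ a else a |: S.
have tK : involutive t.
  move=> S; rewrite {2}/t; case: ifP => aS; rewrite /t.
    by rewrite setD11 setD1K.
  by rewrite setU11 setU1K ?aS.
have t_sub S : (t S \subset B) = (S \subset B).
  rewrite /t; case: ifP => aS; rewrite ?subUset ?sub1set ?aB //.
  by rewrite -{2}(setD1K aS) subUset sub1set aB.
have t_sign S : (-1) ^+ #|t S| = - (-1) ^+ #|S| :> int.
  rewrite /t; case: ifP => aS; last by rewrite cardsU1 aS exprS mulN1r.
  by rewrite -{2}(setD1K aS) cardsU1 setD11 exprS mulN1r opprK.
set s := (\sum_(S | _) _); suff : s = - s by lia.
rewrite {1}/s (reindex_inj (can_inj tK)) /= -sumrN.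
by apply: eq_big => S; [exact: t_sub | rewrite t_sign].
Qed.

Section Crosscut.
Variables (d : Order.disp_t) (L : finTBLatticeType d) (rk : L -> nat).
Hypothesis rk0 : rk \bot%O = 0%N.
Hypothesis atomic :
  forall x : L, x = (\join_(a : L | (rk a == 1%N) && (a <= x)%O) a)%O.
Local Notation A := (atom_type rk).
Local Open Scope order_scope.

Definition crosscut_sum (x : L) : int :=
  \sum_(S : {set A} | fjoin S == x) (-1) ^+ #|S|.

Lemma fjoin_le (S : {set A}) (x : L) :
  (fjoin S <= x) = (S \subset [set a : A | val a <= x]).
Proof.
apply/joinsP/subsetP => le_Sx a aS; first by rewrite inE le_Sx.
by have := le_Sx a aS; rewrite inE.
Qed.

Lemma atoms_below_eq0 (x : L) : ([set a : A | val a <= x] == set0) = (x == \bot).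
Proof.
have [->|nx] := eqVneq x \bot.
  apply/eqP/setP => -[a ra]; rewrite !inE /= lex0; apply/negbTE/eqP => a0.
  by move: ra; rewrite a0 rk0.
apply/set0Pn; case: (pickP (fun a : L => (rk a == 1%N) && (a <= x))).
  move=> a /andP[ra ax].
  by exists (exist _ a ra); rewrite inE.
by move=> none; move: nx; rewrite {1}(atomic x) big_pred0 ?eqxx.
Qed.

Lemma sum_crosscut_sum_le (x : L) :
  \sum_(z | z <= x) crosscut_sum z = (x == \bot)%:R.
Proof.
have -> : \sum_(z | z <= x) crosscut_sum z =
          \sum_(S : {set A} | S \subset [set a : A | val a <= x]) (-1) ^+ #|S|.
  rewrite [RHS](partition_big (fun S => fjoin S) (fun z => z <= x)) => [|S]; last first.
    by rewrite fjoin_le.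
  apply: eq_bigr => z zx; apply: eq_bigl => S.
  by rewrite -fjoin_le; case: eqP => [->|]; rewrite ?zx ?andbF.
rewrite -atoms_below_eq0; case: eqP => [->|/eqP]; last exact: sum_subsets_sign_eq0.
by rewrite (eq_bigl (pred1 set0)) => [|S]; rewrite ?big_pred1_eq ?cards0 ?subset0.
Qed.

Lemma mobius_bot_crosscut (x : L) : mobius \bot x = crosscut_sum x.
Proof. exact: mobius_bot_unique sum_crosscut_sum_le x. Qed.

End Crosscut.

Section Cells.
Variables (d : Order.disp_t) (L : finTBLatticeType d) (rk n : L -> nat).
Local Notation A := (atom_type rk).

Lemma card_cells k :
  #|cells rk n k| = (\sum_(S : {set A} | #|S| == k) n (fjoin S))%N.
Proof.
rewrite /cells -sum1dep_card.
transitivity (\sum_(S : {set A} | #|S| == k) \sum_(j < n (fjoin S)) 1)%N.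
  by rewrite sig_big_dep; apply: eq_bigl => -[S j] /=; rewrite andbT.
by apply: eq_bigr => S _; rewrite sum1_card card_ord.
Qed.

Lemma alt_sum_card_cells :
  \sum_(k < #|{: A}|.+1) (-1) ^+ k * #|cells rk n k|%:Z =
  \sum_(S : {set A}) (-1) ^+ #|S| * (n (fjoin S))%:Z.
Proof.
rewrite [RHS](partition_big (fun S : {set A} => inord #|S| : 'I_#|{: A}|.+1) predT) //=.
apply: eq_bigr => k _; rewrite card_cells -natz natr_sum mulr_sumr.
apply: eq_big => [S|S /eqP <-]; last by rewrite natz.
by rewrite -val_eqE /= inordK // ltnS max_card.
Qed.

Lemma alt_sum_by_join :
  \sum_(S : {set A}) (-1) ^+ #|S| * (n (fjoin S))%:Z =
  \sum_(x : L) crosscut_sum rk x * (n x)%:Z.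
Proof.
rewrite (partition_big (fun S : {set A} => fjoin S) predT) //=.
by apply: eq_bigr => x _; rewrite mulr_suml; apply: eq_bigr => S /eqP <-.
Qed.

End Cells.

Lemma mxrank_homology (K : fieldType) p q r (A : 'M[K]_(p, q)) (B : 'M_(q, r)) :
  A *m B = 0 ->
  (\rank (kermx B) - \rank (A :&: kermx B) + \rank A + \rank B)%N = q.
Proof.
move=> AB0; have AkB : (A <= kermx B)%MS by apply/sub_kermxP.
have := mxrankS AkB; have := rank_leq_row B.
rewrite (capmx_idPl AkB) mxrank_ker; lia.
Qed.

Section Homology.
Variables (K : fieldType) (d : Order.disp_t) (L : finTBLatticeType d) (rk n : L -> nat).
Variable res : forall x y : L, 'M[K]_(n y, n x).
Hypothesis bd_bd : forall k, bd rk res k.+1 *m bd rk res k = 0.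
Local Notation A := (atom_type rk).

Lemma dimHC0 : dimHC rk res 0 = (#|cells rk n 0| - \rank (bd rk res 0))%N.
Proof. by rewrite /dimHC /= mxrank1 (capmx_idPl (submx1 _)). Qed.

Lemma dimHCS k :
  (dimHC rk res k.+1)%:Z =
  #|cells rk n k.+1|%:Z - (\rank (bd rk res k))%:Z - (\rank (bd rk res k.+1))%:Z.
Proof. by have := mxrank_homology (bd_bd k); rewrite /dimHC /=; lia. Qed.

Lemma euler_HC_partial N :
  \sum_(k < N.+1) (-1) ^+ k * (dimHC rk res k)%:Z =
  \sum_(k < N.+1) (-1) ^+ k * #|cells rk n k|%:Z -
  (-1) ^+ N * (\rank (bd rk res N))%:Z.
Proof.
elim: N => [|N IH].
  by rewrite !big_ord1 dimHC0 expr0 !mul1r subzn ?rank_leq_col.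
rewrite big_ord_recr /= IH [in RHS]big_ord_recr /= dimHCS exprS.
ring.
Qed.

Lemma euler_HC_alt_sum_cells :
  euler_HC rk res = \sum_(k < #|{: A}|.+1) (-1) ^+ k * #|cells rk n k|%:Z.
Proof.
rewrite /euler_HC euler_HC_partial.
suff -> : \rank (bd rk res #|{: A}|) = 0%N by rewrite mulr0 subr0.
apply/eqP; rewrite -leqn0; apply: leq_trans (rank_leq_row _) _.
by rewrite card_cells big_pred0 // => S; rewrite eqn_leq ltnNge max_card andbF.
Qed.

End Homology.

Section Signs.
Variables (K : fieldType) (d : Order.disp_t) (L : finTBLatticeType d) (rk : L -> nat).
Local Notation A := (atom_type rk).

Definition preceding (T : {set A}) (y : A) : {set A} :=
  [set p in T | (enum_rank p < enum_rank y)%N].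

Lemma eps_count_setD1 (S T : {set A}) y :
  S :\: T = [set y] -> eps_count S T = #|preceding T y|.
Proof.
move=> dST; have inj_y : injective (fun p : A => (p, y)) by move=> p q [].
rewrite /eps_count -[#|preceding T y|](card_imset _ inj_y); apply: eq_card => -[p q].
rewrite inE /= dST in_set1.
apply/idP/imsetP => [/andP[/andP[pT /eqP ->] lt_py]|[p' p'T [-> ->]]].
  by exists p; rewrite // inE pT lt_py.
by move: p'T; rewrite inE => /andP[-> ->]; rewrite eqxx.
Qed.

Lemma card_preceding_setU1 (U : {set A}) x y : x \notin U ->
  #|preceding (x |: U) y| = (#|preceding U y| + (enum_rank x < enum_rank y))%N.
Proof.
move=> xU; rewrite /preceding; case lt_xy: (enum_rank x < enum_rank y)%N.
  have -> : [set p in x |: U | (enum_rank p < enum_rank y)%N] =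
            x |: [set p in U | (enum_rank p < enum_rank y)%N].
    by apply/setP => p; rewrite !inE; case: eqP => [->|]; rewrite ?lt_xy.
  by rewrite cardsU1 inE (negbTE xU) addnC.
rewrite addn0; apply: eq_card => p; rewrite !inE.
by case: eqP => [->|] //=; rewrite lt_xy (negbTE xU).
Qed.

Lemma setU1D (U : {set A}) x : x \notin U -> (x |: U) :\: U = [set x].
Proof.
move=> xU; apply/setP => y; rewrite !inE.
by case: (eqVneq y x) => [->|] /=; rewrite ?xU // andNb.
Qed.

(* Exactly one of [a < b], [b < a] holds in the order of the atoms, so the two
   paths from [a |: (b |: U)] down to [U] carry opposite signs. *)
Lemma eps_pair_cancel (U : {set A}) a b : a \notin U -> b \notin U -> a != b ->
  eps K (a |: (b |: U)) (a |: U) * eps K (a |: U) U +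
  eps K (a |: (b |: U)) (b |: U) * eps K (b |: U) U = 0.
Proof.
move=> aU bU ab; rewrite /eps.
have ->: eps_count (a |: (b |: U)) (a |: U) = #|preceding (a |: U) b|.
  by apply: eps_count_setD1; rewrite setUCA setU1D // !inE negb_or eq_sym ab.
have ->: eps_count (a |: (b |: U)) (b |: U) = #|preceding (b |: U) a|.
  by apply: eps_count_setD1; rewrite setU1D // !inE negb_or ab.
rewrite !(eps_count_setD1 (setU1D _)) // !card_preceding_setU1 //.
case: (ltngtP (enum_rank a) (enum_rank b)) => [_|_|/val_inj/enum_rank_inj eq_ab] /=.
- by rewrite addn1 addn0 exprS; ring.
- by rewrite addn1 addn0 exprS; ring.
- by rewrite eq_ab eqxx in ab.
Qed.

Lemma between_setU2 (U T : {set A}) a b : a \notin U -> b \notin U ->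
  [&& #|T| == #|U|.+1, U \subset T & T \subset a |: (b |: U)] =
  (T \in [set a |: U; b |: U]).
Proof.
move=> aU bU; rewrite !inE; apply/idP/idP.
  case/and3P => /eqP cardT UT TS.
  have /cards1P[x dTU] : #|T :\: U| == 1.
    by rewrite cardsD (setIidPr UT) cardT subSn // subnn.
  have /setDP[xT xU] : x \in T :\: U by rewrite dTU set11.
  have -> : T = x |: U by rewrite -(setID T U) (setIidPr UT) dTU setUC.
  have := subsetP TS x xT; rewrite !inE (negbTE xU) orbF.
  by case/orP => /eqP ->; rewrite eqxx ?orbT.
case/orP => /eqP ->; rewrite cardsU1 ?aU ?bU /= eqxx subsetUr.
  by rewrite setUS ?subsetUr.
by rewrite subsetUr.
Qed.

Lemma setU2_of_card (U S : {set A}) : U \subset S -> #|S| = #|U|.+2 ->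
  exists a b, [/\ a \notin U, b \notin U, a != b & S = a |: (b |: U)].
Proof.
move=> US cardS; have /cards2P[a [b [ab dSU]]] : #|S :\: U| == 2.
  by rewrite cardsD (setIidPr US) cardS -addn2 addKn.
have /setDP[_ aU] : a \in S :\: U by rewrite dSU !inE eqxx.
have /setDP[_ bU] : b \in S :\: U by rewrite dSU !inE eqxx orbT.
exists a, b; split => //.
by rewrite -(setID S U) (setIidPr US) dSU setUC -setUA.
Qed.

Lemma eps_sum_eq0 (S U : {set A}) k : #|S| = k.+2 -> #|U| = k ->
  \sum_(T : {set A} | [&& #|T| == k.+1, U \subset T & T \subset S])
     eps K S T * eps K T U = 0.
Proof.
move=> cardS cardU; have [US|nUS] := boolP (U \subset S); last first.
  rewrite big_pred0 // => T; apply/negbTE; apply: contra nUS => /and3P[_ UT TS].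
  exact: subset_trans UT TS.
rewrite -cardU in cardS *; have [a [b [aU bU ab dS]]] := setU2_of_card US cardS.
rewrite dS (eq_bigl _ _ (fun T => between_setU2 T aU bU)).
rewrite big_setU1 ?big_set1 /= ?eps_pair_cancel // !inE.
by apply/eqP => /setP/(_ a); rewrite !inE eqxx (negbTE ab) (negbTE aU).
Qed.

End Signs.

Section Boundary.
Variables (K : fieldType) (d : Order.disp_t) (L : finTBLatticeType d) (rk n : L -> nat).
Variable res : forall x y : L, 'M[K]_(n y, n x).
Hypothesis res_comp : forall x y z : L, (x <= y)%O -> (y <= z)%O ->
  res x z = res y z *m res x y.
Local Notation A := (atom_type rk).
Local Notation cell := (cell rk n).

Definition bd_coef (x y : cell) : K :=
  if tag y \subset tag x then
    eps K (tag x) (tag y) * res (fjoin (tag y)) (fjoin (tag x)) (tagged x) (tagged y)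
  else 0.

Lemma bd_bd k : bd rk res k.+1 *m bd rk res k = 0.
Proof.
apply/matrixP => r c; rewrite !mxE.
under eq_bigr => j _ do rewrite !mxE /=.
rewrite -(big_enum_val (fun y => bd_coef (enum_val r) y * bd_coef y (enum_val c))) /=.
have := enum_valP r; have := enum_valP c.
case: (enum_val r) (enum_val c) => [S i] [U l]; rewrite !inE /= => /eqP cardU /eqP cardS.
transitivity (\sum_(T : {set A} | #|T| == k.+1) \sum_(j < n (fjoin T))
   bd_coef (existT _ S i) (existT _ T j) * bd_coef (existT _ T j) (existT _ U l)).
  by rewrite sig_big_dep; apply: eq_bigl => -[T j]; rewrite /= inE andbT.
transitivity (\sum_(T : {set A} | #|T| == k.+1)
   (if (U \subset T) && (T \subset S) then eps K S T * eps K T U else 0) *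
   res (fjoin U) (fjoin S) i l).
  apply: eq_bigr => T _; rewrite /bd_coef /=.
  have [TS|_] := boolP (T \subset S); have [UT|_] := boolP (U \subset T) => /=;
    try by rewrite [RHS]mul0r; apply: big1 => j _; rewrite ?mul0r ?mulr0.
  rewrite (res_comp (le_joins _ UT) (le_joins _ TS)) mxE mulr_sumr.
  by apply: eq_bigr => j _; ring.
rewrite -mulr_suml; have := eps_sum_eq0 K cardS cardU.
by rewrite big_mkcondr /= => ->; rewrite mul0r.
Qed.

End Boundary.

Unset Implicit Arguments.

Theorem corollary4 (K : fieldType) (d : Order.disp_t) (L : finTBLatticeType d)
  (rk : L -> nat)
  (rk0 : rk \bot%O = 0%N)
  (rk_graded : forall x y : L, covers x y -> rk y = (rk x).+1)
  (atomic : forall x : L, x = (\join_(a : L | (rk a == 1%N) && (a <= x)%O) a)%O)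
  (n : L -> nat) (res : forall x y : L, 'M[K]_(n y, n x))
  (res_id : forall x : L, res x x = 1%:M)
  (res_comp : forall x y z : L, (x <= y)%O -> (y <= z)%O ->
                res x z = res y z *m res x y) :
  euler_HC rk res = ((chi_poly n)^`()).[1%R] /\
  ((chi_poly n)^`()).[1%R] = (\sum_(x : L) mobius \bot%O x * (n x)%:Z)%R.
Proof.
split; last exact: chi_poly_deriv1.
rewrite chi_poly_deriv1 (euler_HC_alt_sum_cells (bd_bd rk res_comp)).
rewrite alt_sum_card_cells alt_sum_by_join.
by apply: eq_bigr => x _; rewrite (mobius_bot_crosscut rk0 atomic).
Qed.
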